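(* For every finite group $G\le\mathrm{O}(d)$ and all $z_1,\ldots,z_n\in\mathbb{R}^d$, $\tilde\alpha(\{z_i\}_{i=1}^n,G)\le\alpha(\{z_i\}_{i=1}^n,G)$.
   Context: For $x\in\mathbb{R}^d$, $[x]:=\{gx:g\in G\}$. The open Voronoi cell $V_x$ is the set of $y$ such that $x$ is the unique maximizer of $\langle p,y\rangle$ over $p\in[x]$; $Q_x:=\bigcup_{p\in[x]}V_p$. $P(G):=\{x:\mathrm{stab}_G(x)=\{\mathrm{id}\}\}$, $\mathcal{O}:=P(G)\cap\bigcap_{i=1}^nQ_{z_i}$. For $x\in\mathcal{O}$, $v_i(x)$ is the unique element of $\arg\max_{p\in[z_i]}\langle p,x\rangle$. $S(x,y):=\{q\in[y]:V_q\cap V_x\ne\varnothing\}$, and $\mathcal{F}(x,y)$ is the set of functions $f:\{1,\ldots,n\}\to[y]$ with $f(i)\in S(x,y)\cap\arg\max_{q\in[y]}\langle q,v_i(x)\rangle$ for all $i$. Define $\alpha(\{z_i\},G):=\inf_{x,y\in\mathcal{O}}\max_{f\in\mathcal{F}(x,y)}\big(\sum_{w\in S(x,y)}\lambda_{\min}(\sum_{i\in f^{-1}(w)}v_i(x)v_i(x)^\top)\big)^{1/2}$. The Voronoi characteristic is $\chi(G):=\max_{x,y\in P(G)}|S(x,y)|$, and $\tilde\alpha(\{z_i\},G):=\min_{I\subseteq\{1,\ldots,n\},\,|I|\ge n/\chi(G)}\ \min_{(g_i)_{i\in I}\in G^I}\big(\lambda_{\min}(\sum_{i\in I}(g_iz_i)(g_iz_i)^\top)\big)^{1/2}$.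 *)

From HB Require Import structures.
From mathcomp Require Import all_boot all_order all_algebra.
From mathcomp Require Import boolp classical_sets reals.
Set Implicit Arguments. Unset Strict Implicit. Unset Printing Implicit Defensive.
Import Order.TTheory GRing.Theory Num.Theory.
Local Open Scope ring_scope.
Local Open Scope classical_set_scope.

Section Voronoi.
Variables (R : realType) (d : nat).
Implicit Types (G : seq 'M[R]_d) (x y p q : 'cV[R]_d).

Definition dot p y : R := (p^T *m y) ord0 ord0.

Definition orbit G x : seq 'cV[R]_d := [seq g *m x | g <- G].

(* y is in the open Voronoi cell V_x: x is the unique maximizer of <p,y> over p in [x] *)
Definition voronoi G x y : Prop :=
  forall p, p \in orbit G x -> p != x -> dot p y < dot x y.

Definition inQ G z y : Prop := exists p, p \in orbit G z /\ voronoi G p y.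

Definition inP G x : Prop := forall g, g \in G -> g *m x = x -> g = 1%:M.

Definition inO n G (z : 'I_n -> 'cV[R]_d) x : Prop :=
  inP G x /\ forall i, inQ G (z i) x.

Definition argmax_orb G z x : set 'cV[R]_d :=
  [set p | p \in orbit G z /\ forall q, q \in orbit G z -> dot q x <= dot p x].

(* v_z(x): the (for x in O, unique) element of argmax_{p in [z]} <p,x> *)
Definition vsel G z x : 'cV[R]_d := xget 0 (argmax_orb G z x).

Definition Sset G x y : seq 'cV[R]_d :=
  [seq q <- undup (orbit G y) | `[< exists w, voronoi G q w /\ voronoi G x w >] ].

Definition lambda_min (A : 'M[R]_d) : R := inf [set a : R | eigenvalue A a].

Definition Ffam n G (z : 'I_n -> 'cV[R]_d) x y (f : 'I_n -> 'cV[R]_d) : Prop :=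
  forall i, f i \in Sset G x y /\ f i \in argmax_orb G y (vsel G (z i) x).

Definition Fvalue n G (z : 'I_n -> 'cV[R]_d) x y (f : 'I_n -> 'cV[R]_d) : R :=
  Num.sqrt (\sum_(w <- Sset G x y)
     lambda_min (\sum_(i | f i == w) (vsel G (z i) x *m (vsel G (z i) x)^T))).

Definition alpha n G (z : 'I_n -> 'cV[R]_d) : R :=
  inf [set r : R | exists x y, inO G z x /\ inO G z y /\
        r = sup [set s : R | exists f, Ffam G z x y f /\ s = Fvalue G z x y f]].

Definition chi G : R :=
  sup [set r : R | exists x y, inP G x /\ inP G y /\ r = (size (Sset G x y))%:R].

Definition alpha_tilde n G (z : 'I_n -> 'cV[R]_d) : R :=
  inf [set r : R | exists I : {set 'I_n}, n%:R / chi G <= (#|I|)%:R /\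
        exists g : 'I_n -> 'M[R]_d, (forall i, i \in I -> g i \in G) /\
          r = Num.sqrt (lambda_min
                (\sum_(i in I) ((g i *m z i) *m (g i *m z i)^T)))].

End Voronoi.

(* Fix x, y in O and f in F(x,y). The fibres of f partition the n indices
   into at most |S(x,y)| <= chi(G) classes, so some fibre I has at least
   n / chi(G) elements. Each v_i(x) is some g_i z_i with g_i in G, so the
   Gram matrix of the v_i(x), i in I, is admissible in the definition of
   alpha_tilde, and its smallest eigenvalue is one of the nonnegative summands
   of the value of f. For the infimum and suprema to be over nonempty sets,
   O contains every vector off finitely many hyperplanes, and F(x,y) is
   nonempty by a perturbation argument in the Voronoi diagram of [y]. *)

From HB Require Import structures.
From mathcomp Require Import all_boot all_order all_algebra.
From mathcomp Require Import boolp classical_sets reals lra.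
Import Order.TTheory GRing.Theory Num.Theory.
Set Implicit Arguments. Unset Strict Implicit. Unset Printing Implicit Defensive.
Local Open Scope ring_scope.

Section SmallEnough.
Variable R : realType.

Definition small_enough (P : R -> Prop) :=
  exists2 e0, 0 < e0 & forall e, 0 < e -> e <= e0 -> P e.

Lemma small_enough_ex P : small_enough P -> exists2 e, 0 < e & P e.
Proof. by move=> [e0 e0_gt0 P_e0]; exists e0 => //; apply: P_e0. Qed.

Lemma small_enough_and P Q :
  small_enough P -> small_enough Q -> small_enough (fun e => P e /\ Q e).
Proof.
move=> [e1 e1_gt0 P_e] [e2 e2_gt0 Q_e].
exists (Order.min e1 e2) => [|e e_gt0]; first by rewrite lt_min e1_gt0.
by rewrite le_min => /andP[e_e1 e_e2]; split; [apply: P_e | apply: Q_e].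
Qed.

Lemma small_enough_all (T : eqType) (s : seq T) (P : T -> R -> Prop) :
  (forall i, i \in s -> small_enough (P i)) ->
  small_enough (fun e => forall i, i \in s -> P i e).
Proof.
elim: s => [|j s IHs] Ps; first by exists 1.
have Pj := Ps j (mem_head j s).
have {IHs}Ps' : small_enough (fun e => forall i, i \in s -> P i e).
  by apply: IHs => i si; apply: Ps; rewrite inE si orbT.
have [e0 e0_gt0 PQ] := small_enough_and Pj Ps'.
exists e0 => // e e_gt0 e_e0 i; rewrite inE => /predU1P [->|si].
  by have [] := PQ e e_gt0 e_e0.
by have [_] := PQ e e_gt0 e_e0; apply.
Qed.

Lemma small_enough_lexpos (a b : R) :
  0 <= a -> (a = 0 -> 0 < b) -> small_enough (fun e => 0 < a + e * b).
Proof.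
move=> a_ge0 b_gt0; have [a0|a_neq0] := eqVneq a 0.
  by exists 1 => // e e_gt0 _; rewrite a0 add0r mulr_gt0 ?b_gt0.
have a_gt0 : 0 < a by rewrite lt_def a_neq0.
have nb_gt0 : 0 < `|b| + 1 by rewrite ltr_wpDl.
exists (a / (`|b| + 1)) => [|e e_gt0]; first by rewrite divr_gt0.
rewrite ler_pdivlMr // => e_le.
have : - (e * `|b|) <= e * b by rewrite -mulrN ler_pM2l // lerNl -normrN ler_norm.
have : 0 <= `|b| by [].
nra.
Qed.

Lemma small_enough_neq0 (a b : R) :
  (a != 0) || (b != 0) -> small_enough (fun e => a + e * b != 0).
Proof.
have [a0 /= b_neq0|a_neq0 _] := eqVneq a 0.
  by exists 1 => // e e_gt0 _; rewrite a0 add0r mulf_neq0 // gt_eqF.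
have [e0 e0_gt0 pos] : small_enough (fun e => 0 < a ^+ 2 + e * (a * b)).
  by apply: small_enough_lexpos => [|/eqP]; rewrite ?sqr_ge0 ?sqrf_eq0 ?(negbTE a_neq0).
exists e0 => // e e_gt0 e_e0; have := pos e e_gt0 e_e0.
by apply: contraTneq => sum0; rewrite expr2 mulrCA -mulrDr sum0 mulr0 ltxx.
Qed.

End SmallEnough.

Lemma exists_argmax_seq (T : eqType) disp (O : orderType disp)
    (s : seq T) (F : T -> O) :
  s != [::] -> exists2 c, c \in s & forall c', c' \in s -> (F c' <= F c)%O.
Proof.
elim: s => [//|a s IHs] _; have [->|s_neq0] := eqVneq s [::].
  by exists a; rewrite ?mem_head // => c; rewrite inE => /eqP ->.
have [c cs c_max] := IHs s_neq0.
have [Fac|Fca] := leP (F a) (F c).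
  exists c => [|c']; first by rewrite inE cs orbT.
  by rewrite inE => /predU1P [->|/c_max].
exists a => [|c']; first exact: mem_head.
by rewrite inE => /predU1P [->//|/c_max/le_trans]; apply; apply: ltW.
Qed.

Lemma exists_lex_argmax (T : eqType) disp (O : orderType disp)
    (s : seq T) (F1 F2 : T -> O) :
  s != [::] -> {in s &, injective F2} ->
  exists2 p, p \in s & (forall q, q \in s -> (F1 q <= F1 p)%O) /\
    (forall q, q \in s -> q != p -> F1 q = F1 p -> (F2 q < F2 p)%O).
Proof.
move=> s_neq0 F2_inj; have [p1 p1s p1_max] := exists_argmax_seq F1 s_neq0.
set ties := [seq q <- s | F1 q == F1 p1].
have ties_neq0 : ties != [::].
  apply/eqP => ties0; have : p1 \in ties by rewrite mem_filter eqxx p1s.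
  by rewrite ties0.
have [p p_ties p_max] := exists_argmax_seq F2 ties_neq0.
move: (p_ties); rewrite mem_filter => /andP [/eqP Fp ps].
exists p => //; split=> [q qs|q qs qp Fq]; first by rewrite Fp; apply: p1_max.
have q_ties : q \in ties by rewrite mem_filter Fq Fp eqxx.
by rewrite lt_neqAle p_max // andbT; apply: contra qp => /eqP/F2_inj ->.
Qed.

Lemma pigeonhole_fiber (I : finType) (T : eqType) (S : seq T) (f : I -> T) :
  uniq S -> S != [::] -> (forall i, f i \in S) ->
  exists2 w, w \in S & (#|I| <= size S * #|[set i | f i == w]|)%N.
Proof.
move=> S_uniq S_neq0 fS; pose fiber w := #|[set i | f i == w]|.
have [w wS w_max] := exists_argmax_seq fiber S_neq0.
exists w => //.
have -> : #|I| = (\sum_(v <- S) fiber v)%N.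
  rewrite -sum1_card; under [RHS]eq_bigr => v _ do rewrite /fiber -sum1dep_card big_mkcond.
  rewrite exchange_big /=; apply: eq_bigr => i _; rewrite -big_mkcond sum1_count.
  by rewrite (eq_count (a2 := pred1 (f i))) ?count_uniq_mem ?fS // => v; rewrite /= eq_sym.
apply: (@leq_trans (\sum_(v <- S) fiber w)).
  by rewrite !big_seq; apply: leq_sum => v /w_max.
by rewrite big_const_seq count_predT iter_addn_0 mulnC.
Qed.

Lemma has_ubound_seq_valued (R : realType) (I : finType) (T : choiceType) (S : seq T)
    (P : (I -> T) -> Prop) (F : (I -> T) -> R) :
  (forall f, P f -> forall i, f i \in S) ->
  has_ubound [set s | exists f, P f /\ s = F f]%classic.
Proof.
move=> PS; exists (\sum_(phi : {ffun I -> seq_sub S}) `|F (fun i => val (phi i))|).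
move=> _ [f [Pf ->]]; pose phi := [ffun i => SeqSub (PS f Pf i)].
have -> : f = (fun i => val (phi i)) by apply: funext => i; rewrite ffunE.
apply: le_trans (ler_norm _) _.
by rewrite (bigD1 phi) //= lerDl; apply: sumr_ge0 => psi _.
Qed.

Section Vectors.
Variables (R : realType) (d : nat).
Implicit Types (p q u v x : 'cV[R]_d).

Lemma dotC p q : dot p q = dot q p.
Proof. by rewrite /dot -{1}(trmxK q) -trmx_mul mxE. Qed.

Lemma dotDr p q u : dot p (q + u) = dot p q + dot p u.
Proof. by rewrite /dot mulmxDr mxE. Qed.

Lemma dotZr a p q : dot p (a *: q) = a * dot p q.
Proof. by rewrite /dot -scalemxAr mxE. Qed.

Lemma dotBr p q u : dot p (q - u) = dot p q - dot p u.
Proof. by rewrite /dot mulmxBr !mxE. Qed.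

Lemma dotBl p q u : dot (p - q) u = dot p u - dot q u.
Proof. by rewrite !(dotC _ u) dotBr. Qed.

Lemma dot_mulmxl (g : 'M[R]_d) p q : dot (g *m p) q = dot p (g^T *m q).
Proof. by rewrite /dot trmx_mul mulmxA. Qed.

Lemma dot_row (M : 'M[R]_d) i x : dot (row i M)^T x = (M *m x) i ord0.
Proof. by rewrite /dot trmxK -row_mul mxE. Qed.

Lemma dot_gt0 p : p != 0 -> 0 < dot p p.
Proof.
move=> p_neq0; have sq_ge0 j : 0 <= p j ord0 * p j ord0 by rewrite -expr2 sqr_ge0.
have dotE : dot p p = \sum_j p j ord0 * p j ord0.
  by rewrite /dot mxE; apply: eq_bigr => j _; rewrite mxE.
rewrite dotE lt_def sumr_ge0 // andbT; apply: contra p_neq0.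
rewrite psumr_eq0 // => /allP p0; apply/eqP/matrixP => j k; rewrite (ord1 k) mxE.
by have /implyP/(_ isT) := p0 j (mem_index_enum j); rewrite mulf_eq0 orbb => /eqP.
Qed.

Definition diffs (Y : seq 'cV[R]_d) := [seq p - q | p <- Y, q <- [seq q <- Y | q != p]].

Lemma diffs_neq0 Y a : a \in diffs Y -> a != 0.
Proof.
by move=> /allpairsPdep [p [q [_ + ->]]]; rewrite mem_filter subr_eq0 eq_sym => /andP[].
Qed.

Lemma dot_inj_diffs Y u :
  (forall a, a \in diffs Y -> dot a u != 0) -> {in Y &, injective (fun p => dot p u)}.
Proof.
move=> u_sep p q pY qY; apply: contra_eq => pq; rewrite -subr_eq0 -dotBl.
by apply: u_sep; apply/allpairsPdep; exists p, q; rewrite mem_filter eq_sym pq.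
Qed.

Lemma exists_dot_neq0 (s : seq 'cV[R]_d) :
  (forall a, a \in s -> a != 0) -> exists u, forall a, a \in s -> dot a u != 0.
Proof.
elim: s => [|a s IHs] s_neq0; first by exists 0.
have [u u_s] : exists u, forall b, b \in s -> dot b u != 0.
  by apply: IHs => b bs; apply: s_neq0; rewrite inE bs orbT.
have [a_u|a_u] := eqVneq (dot a u) 0; last first.
  by exists u => b; rewrite inE => /predU1P [->|/u_s].
have [t t_gt0 t_s] : exists2 t, 0 < t & forall b, b \in s -> dot b u + t * dot b a != 0.
  by apply/small_enough_ex/small_enough_all => b bs; apply: small_enough_neq0; rewrite u_s.
exists (u + t *: a) => b; rewrite inE dotDr dotZr => /predU1P [->|/t_s//].
by rewrite a_u add0r mulf_neq0 ?gt_eqF ?dot_gt0 ?s_neq0 ?mem_head.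
Qed.

Lemma strict_argmax_perturb (P : seq 'cV[R]_d) p v u :
    (forall q, q \in P -> dot q v <= dot p v) ->
    (forall q, q \in P -> q != p -> dot q v = dot p v -> dot q u < dot p u) ->
  small_enough (fun e => forall q, q \in P -> q != p ->
    dot q (v + e *: u) < dot p (v + e *: u)).
Proof.
move=> p_max p_strict; apply: small_enough_all => q qP.
have [->|qp] := eqVneq q p; first by exists 1 => // e _ _; rewrite eqxx.
have [||e0 e0_gt0 pos] := small_enough_lexpos
    (a := dot p v - dot q v) (b := dot p u - dot q u).
- by rewrite subr_ge0 p_max.
- by move/eqP; rewrite subr_eq0 eq_sym => /eqP/(p_strict q qP qp); rewrite subr_gt0.
exists e0 => // e e_gt0 e_e0 _; have := pos e e_gt0 e_e0.
by rewrite !dotDr !dotZr; lra.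
Qed.

Lemma lambda_min_gram_ge0 (I : finType) (P : pred I) (a : I -> 'cV[R]_d) :
  0 <= lambda_min (\sum_(i | P i) a i *m (a i)^T).
Proof.
set M := \sum_(i | P i) _; rewrite /lambda_min.
have [->|/set0P eig_neq0] := eqVneq [set l | eigenvalue M l]%classic set0.
  by rewrite inf0.
apply: lb_le_inf => // l /eigenvalueP [u uM u_neq0].
have quadE : (u *m M *m u^T) ord0 ord0 = l * dot u^T u^T.
  by rewrite uM -scalemxAl mxE /dot trmxK.
have quad_ge0 : 0 <= (u *m M *m u^T) ord0 ord0.
  rewrite mulmx_sumr mulmx_suml summxE; apply: sumr_ge0 => i _.
  by rewrite mulmxA -mulmxA -trmx_mul mxE big_ord1 !mxE -expr2 sqr_ge0.
by move: quad_ge0; rewrite quadE pmulr_lge0 // dot_gt0 // trmx_eq0.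
Qed.

Lemma size_Sset_le_chi (G : seq 'M[R]_d) x y :
  inP G x -> inP G y -> (size (Sset G x y))%:R <= chi G.
Proof.
move=> Px Py; apply: sup_upper_bound; last by exists x, y.
split; first by exists (size (Sset G x y))%:R, x, y.
exists (size G)%:R => _ [x' [y' [_ [_ ->]]]]; rewrite ler_nat size_filter.
by rewrite (leq_trans (count_size _ _)) // (leq_trans (size_undup _)) // size_map.
Qed.

Lemma alpha_tilde_le n (z : 'I_n -> 'cV[R]_d) G (I : {set 'I_n}) g :
    n%:R / chi G <= #|I|%:R -> (forall i, i \in I -> g i \in G) ->
  alpha_tilde G z <= Num.sqrt (lambda_min (\sum_(i in I) (g i *m z i) *m (g i *m z i)^T)).
Proof.
move=> I_card gG; apply: ge_inf; last by exists I; split=> //; exists g.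
by exists 0 => _ [J [_ [h [_ ->]]]]; apply: sqrtr_ge0.
Qed.

End Vectors.

Section OrthogonalGroup.
Variables (R : realType) (d : nat) (G : seq 'M[R]_d).
Hypotheses (G1 : 1%:M \in G)
  (GM : forall g h, g \in G -> h \in G -> g *m h \in G)
  (G_orth : forall g, g \in G -> g *m g^T = 1%:M).
Implicit Types (p q u v x y z : 'cV[R]_d).

Lemma trmx_orthK g : g \in G -> g^T *m g = 1%:M.
Proof. by move=> gG; apply: mulmx1C; apply: G_orth. Qed.

Lemma dot_orth g p q : g \in G -> dot (g *m p) (g *m q) = dot p q.
Proof. by move=> gG; rewrite dot_mulmxl mulmxA trmx_orthK // mul1mx. Qed.

(* Left multiplication by [g] permutes the finite set [G], so it hits [1]. *)
Lemma trmx_in_G g : g \in G -> g^T \in G.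
Proof.
move=> gG; have gK : {in undup G &, injective (mulmx g)}.
  by move=> h1 h2 _ _ e; rewrite -(mul1mx h1) -(mul1mx h2) -(trmx_orthK gG) -!mulmxA e.
have gG_sub : {subset map (mulmx g) (undup G) <= undup G}.
  by move=> _ /mapP [h hG ->]; rewrite mem_undup GM // -mem_undup.
have gG_uniq : uniq (map (mulmx g) (undup G)) by rewrite map_inj_in_uniq ?undup_uniq.
have [_ gG_eq] := uniq_min_size gG_uniq gG_sub (eq_leq (esym (size_map _ _))).
have /mapP [h hG gh1] : 1%:M \in map (mulmx g) (undup G) by rewrite gG_eq mem_undup.
suff -> : g^T = h by rewrite -mem_undup.
by rewrite -(mulmx1 g^T) gh1 mulmxA trmx_orthK // mul1mx.
Qed.

Lemma orbitP x p : reflect (exists2 g, g \in G & p = g *m x) (p \in orbit G x).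
Proof. exact: mapP. Qed.

Lemma orbit_refl x : x \in orbit G x.
Proof. by apply/orbitP; exists 1%:M; rewrite ?mul1mx. Qed.

Lemma orbit_neq_nil x : orbit G x != [::].
Proof. by apply/eqP => ox0; have := orbit_refl x; rewrite ox0. Qed.

Lemma orbit_trans x p q : p \in orbit G x -> q \in orbit G p -> q \in orbit G x.
Proof.
move=> /orbitP [g gG ->] /orbitP [h hG ->]; apply/orbitP.
by exists (h *m g); rewrite ?GM ?mulmxA.
Qed.

Lemma voronoi_self x : voronoi G x x.
Proof.
move=> _ /orbitP [g gG ->] gx_neq; have := dot_gt0 (p := x - g *m x).
rewrite subr_eq0 eq_sym gx_neq !dotBl !dotBr dot_orth // (dotC x) => /(_ isT).
lra.
Qed.

Lemma dot_orbit_le x p : p \in orbit G x -> dot p x <= dot x x.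
Proof. by move=> px; have [->//|pnx] := eqVneq p x; apply/ltW/voronoi_self. Qed.

Lemma vselP z x : vsel G z x \in orbit G z /\
  forall q, q \in orbit G z -> dot q x <= dot (vsel G z x) x.
Proof.
apply: (xgetPex 0 (P := argmax_orb G z x)).
have [p pz p_max] := exists_argmax_seq (fun p => dot p x) (orbit_neq_nil z).
by exists p; split.
Qed.

Lemma vsel_closed_cell z x p : p \in orbit G x ->
  dot p (vsel G z x) <= dot x (vsel G z x).
Proof.
move=> /orbitP [g gG ->]; have [vz v_max] := vselP z x.
rewrite dot_mulmxl dotC (dotC x); apply: v_max; apply: orbit_trans vz _.
by apply/orbitP; exists g^T; rewrite ?trmx_in_G.
Qed.

Lemma exists_voronoi_separating x (Y : seq 'cV[R]_d) :
  exists u, voronoi G x u /\ {in Y &, injective (fun p => dot p u)}.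
Proof.
have [u0 u0_sep] := exists_dot_neq0 (@diffs_neq0 R d Y).
have cell : small_enough (fun t => voronoi G x (x + t *: u0)).
  apply: strict_argmax_perturb; first exact: dot_orbit_le.
  by move=> p px pnx /eqP; rewrite lt_eqF ?voronoi_self.
have sep : small_enough (fun t => forall a, a \in diffs Y -> dot a x + t * dot a u0 != 0).
  by apply: small_enough_all => a aY; apply: small_enough_neq0; rewrite u0_sep ?orbT.
have [t _ [x_cell t_sep]] := small_enough_ex (small_enough_and cell sep).
exists (x + t *: u0); split=> //; apply: dot_inj_diffs => a aY.
by rewrite dotDr dotZr t_sep.
Qed.

(* Choose [u] in the open cell [V_x] separating [y]'s orbit, then the
   [v]-maximiser [q] with largest [<q, u>]; [v + e u] lies in [V_q] and [V_x]. *)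
Lemma exists_Sset_argmax x y v :
  (forall p, p \in orbit G x -> dot p v <= dot x v) ->
  exists q, q \in Sset G x y /\ q \in argmax_orb G y v.
Proof.
move=> v_cell; have [u [x_u u_inj]] := exists_voronoi_separating x (orbit G y).
have [q qy [q_max q_strict]] := exists_lex_argmax (fun p => dot p v) (orbit_neq_nil y) u_inj.
have [e e_gt0 q_e] := small_enough_ex (strict_argmax_perturb q_max q_strict).
exists q; split; last by rewrite in_setE.
rewrite /Sset mem_filter mem_undup qy andbT; apply/asboolP.
exists (v + e *: u); split=> [p /(orbit_trans qy)|p px pnx]; first exact: q_e.
by rewrite !dotDr !dotZr ler_ltD ?v_cell // ltr_pM2l ?x_u.
Qed.

(* A vector off the kernels of all [g - 1] and separating each orbit [[z_i]]. *)
Lemma exists_inO n (z : 'I_n -> 'cV[R]_d) : exists x, inO G z x.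
Proof.
pose rows := [seq r <- [seq (row k (g - 1%:M))^T | g <- G, k <- enum 'I_d] | r != 0].
pose Y := flatten [seq orbit G (z i) | i <- enum 'I_n].
have [x x_gen] : exists x, forall a, a \in rows ++ diffs Y -> dot a x != 0.
  by apply: exists_dot_neq0 => a; rewrite mem_cat mem_filter => /orP [/andP[]|/diffs_neq0].
have x_inj : {in Y &, injective (fun p => dot p x)}.
  by apply: dot_inj_diffs => a aY; rewrite x_gen // mem_cat aY orbT.
exists x; split=> [g gG gx|i].
  apply/eqP; apply: contraT => g_neq1.
  have [k gk] : exists k, row k (g - 1%:M) != 0.
    apply/existsP; apply: contraR g_neq1 => /existsPn g1_rows; rewrite -subr_eq0.
    by apply/eqP/row_matrixP => k; rewrite row0; apply/eqP/negPn/g1_rows.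
  have : dot (row k (g - 1%:M))^T x != 0.
    apply: x_gen; rewrite mem_cat mem_filter trmx_eq0 gk /=; apply/orP; left.
    by apply/allpairsP; exists (g, k); rewrite mem_enum.
  by rewrite dot_row mulmxBl mul1mx gx subrr mxE eqxx.
have [p pz p_max] := exists_argmax_seq (fun p => dot p x) (orbit_neq_nil (z i)).
have zY q : q \in orbit G (z i) -> q \in Y.
  by move=> qz; apply/flattenP; exists (orbit G (z i)) => //; apply: map_f; rewrite mem_enum.
exists p; split=> // q /(orbit_trans pz) qz qp; rewrite lt_neqAle p_max // andbT.
by apply: contra qp => /eqP/x_inj ->; rewrite ?zY.
Qed.

Lemma exists_Ffam n (z : 'I_n -> 'cV[R]_d) x y : exists f, Ffam G z x y f.
Proof.
have /choice [f Ff] : forall i, exists q,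
    q \in Sset G x y /\ q \in argmax_orb G y (vsel G (z i) x).
  by move=> i; apply: exists_Sset_argmax => p; apply: vsel_closed_cell.
by exists f.
Qed.

Lemma alpha_tilde_le_Fvalue n (z : 'I_n -> 'cV[R]_d) x y f :
  inP G x -> inP G y -> Ffam G z x y f -> alpha_tilde G z <= Fvalue G z x y f.
Proof.
move=> Px Py Ff; set S := Sset G x y; pose fiber w := [set i | f i == w].
have /choice [g gG] : forall i, exists g, g \in G /\ vsel G (z i) x = g *m z i.
  by move=> i; have [/orbitP [g gG ->] _] := vselP (z i) x; exists g.
have S_neq0 : S != [::].
  have [q [qS _]] := exists_Sset_argmax y (@dot_orbit_le x).
  by apply/eqP => S0; rewrite -/S S0 in qS.
have [w wS w_big] : exists2 w, w \in S & (n <= size S * #|fiber w|)%N.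
  have S_uniq : uniq S by rewrite filter_uniq ?undup_uniq.
  by have := pigeonhole_fiber S_uniq S_neq0 (fun i => (Ff i).1); rewrite card_ord.
have chi_ge := size_Sset_le_chi Px Py; rewrite -/S in chi_ge.
have chi_gt0 : 0 < chi G by apply: lt_le_trans chi_ge; rewrite ltr0n lt0n size_eq0.
have w_card : n%:R / chi G <= #|fiber w|%:R.
  rewrite ler_pdivrMr // (le_trans _ (ler_wpM2l (ler0n _ _) chi_ge)) //.
  by rewrite -natrM ler_nat mulnC.
apply: le_trans (alpha_tilde_le z w_card (fun i _ => (gG i).1)) _; apply: ler_wsqrtr.
have -> : \sum_(i in fiber w) (g i *m z i) *m (g i *m z i)^T =
    \sum_(i | f i == w) vsel G (z i) x *m (vsel G (z i) x)^T.
  by apply: eq_big => [i|i _]; rewrite ?inE //; have [_ ->] := gG i.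
rewrite (bigD1_seq w) ?filter_uniq ?undup_uniq //= lerDl.
by apply: sumr_ge0 => v _; apply: lambda_min_gram_ge0.
Qed.

End OrthogonalGroup.

Theorem corollary30 (R : realType) (d n : nat) (G : seq 'M[R]_d)
  (hG1 : 1%:M \in G)
  (hGmul : forall g h, g \in G -> h \in G -> g *m h \in G)
  (hGorth : forall g, g \in G -> g *m g^T = 1%:M)
  (z : 'I_n -> 'cV[R]_d) :
  alpha_tilde G z <= alpha G z.
Proof.
rewrite /alpha; apply: lb_le_inf.
  have [x Ox] := exists_inO hG1 hGmul z.
  by exists (sup [set s | exists f, Ffam G z x x f /\ s = Fvalue G z x x f]), x, x.
move=> _ [x [y [[Px _] [[Py _] ->]]]].
have [f Ff] := exists_Ffam hG1 hGmul hGorth z x y.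
apply: le_trans (alpha_tilde_le_Fvalue hG1 hGmul hGorth Px Py Ff) _.
apply: sup_upper_bound; last by exists f.
split; first by exists (Fvalue G z x y f), f.
by apply: (has_ubound_seq_valued (S := Sset G x y)) => h Fh i; have [] := Fh i.
Qed.
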